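(* Let $f\in\mathbb{Z}[t]$ be irreducible, and let $\alpha$ be a root of $f$ lying in its splitting field. Suppose that $f(t)=g(h(t))-t$ with $g,h\in\mathbb{Z}[t]$ both of degree exceeding $1$. Then $f(g(t))$ is divisible by the minimal polynomial of $h(\alpha)$ over $\mathbb{Q}$, and hence $f$ admits polysmoothness $1-1/\deg(g)$.
   Context: A polynomial $f\in\mathbb{Z}[t]$ of positive degree admits polysmoothness $\theta$ (for a real $\theta\ge 0$) if there exists a non-constant polynomial $g\in\mathbb{Z}[t]$ such that every irreducible factor of $f(g(t))$ has degree at most $\theta\,(\deg f)(\deg g)$. *)

From HB Require Import structures.
From mathcomp Require Import all_boot all_order all_algebra all_field.
Set Implicit Arguments. Unset Strict Implicit. Unset Printing Implicit Defensive.
Import Order.TTheory GRing.Theory Num.Theory.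
Local Open Scope ring_scope.

Definition is_minpoly_Q (x : algC) (p : {poly rat}) : Prop :=
  [/\ p \is monic, root (map_poly ratr p) x &
      forall q : {poly rat}, q != 0 -> root (map_poly ratr q) x ->
        (size p <= size q)%N].

(* Irreducible factors are taken in Q[t] (positive-degree irreducible factors
   in Z[t] and Q[t] have the same degrees; constant factors have degree 0). *)
Definition admits_polysmoothness (f : {poly int}) (theta : rat) : Prop :=
  exists g : {poly int}, (1 < size g)%N /\
    forall q : {poly rat}, irreducible_poly q ->
      q %| map_poly intr (f \Po g) ->
      ((size q).-1)%:R <= theta * ((size f).-1)%:R * ((size g).-1)%:R.

(* Write F = G(H) - X.  Since u - v divides W(u) - W(v) for every W, the
   polynomial H(G) - X divides G(H(G)) - G = F(G), and
   deg F(G) - deg (H(G) - X) = deg F * (deg G - 1).  An irreducible factor of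
   F(G) divides H(G) - X or the cofactor, so its degree is at most
   max(deg F, deg F * (deg G - 1)) = deg F * (deg G - 1) as soon as deg G >= 2.
   For the first claim, F(alpha) = 0 says G(H(alpha)) = alpha, hence
   F(G(H(alpha))) = F(alpha) = 0. *)

From HB Require Import structures.
From mathcomp Require Import all_boot all_order all_algebra all_field.
From mathcomp Require Import zify ring.
Import Order.TTheory GRing.Theory Num.Theory.
Local Open Scope ring_scope.

Lemma size_subX (R : nzRingType) (p : {poly R}) :
  (2 < size p)%N -> size (p - 'X) = size p.
Proof. by move=> szp; rewrite size_polyDl // size_polyN size_polyX. Qed.

Lemma map_comp_poly_subX (aR rR : nzRingType) (phi : {rmorphism aR -> rR})
    (G H : {poly aR}) :
  map_poly phi (G \Po H - 'X) = map_poly phi G \Po map_poly phi H - 'X.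
Proof. by rewrite rmorphB /= map_polyX map_comp_poly. Qed.

Lemma root_comp_subX (R : comNzRingType) (G H : {poly R}) (a : R) :
  root (G \Po H - 'X) a -> root ((G \Po H - 'X) \Po G) H.[a].
Proof.
rewrite /root hornerD hornerN hornerX horner_comp subr_eq0 => /eqP GHa.
by rewrite horner_comp hornerD hornerN hornerX horner_comp !GHa subrr.
Qed.

Lemma mulr_subr_invn (R : numFieldType) (m n : nat) : (0 < n)%N ->
  (1 - n%:R^-1) * m%:R * n%:R = (m * n.-1)%:R :> R.
Proof.
move=> n_gt0; have n_neq0 : n%:R != 0 :> R by rewrite pnatr_eq0 -lt0n.
by rewrite natrM -subn1 natrB //; field.
Qed.

Lemma size_comp_subX (R : idomainType) (G H : {poly R}) :
  (2 < size G)%N -> (2 < size H)%N ->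
  (size (G \Po H - 'X)).-1 = ((size G).-1 * (size H).-1)%N.
Proof.
move=> szG szH; have szGH := size_comp_poly G H.
have GH_ge4 : (2 * 2 <= (size G).-1 * (size H).-1)%N by apply: leq_mul; lia.
have szGH_gt2 : (2 < size (G \Po H))%N by lia.
by rewrite size_subX.
Qed.

Section FieldPolynomials.

Variable R : fieldType.

Lemma dvdp_sub_comp (w u v : {poly R}) :
  (u - v) %| (w \Po u) - (w \Po v).
Proof.
rewrite !comp_polyE -sumrB; apply: (big_ind (fun x => (u - v) %| x)).
- exact: dvdp0.
- exact: dvdp_add.
by move=> i _; rewrite -scalerBr subrXX scalerAr dvdp_mulIl.
Qed.

Lemma irredp_dvdp_mul (q a b : {poly R}) :
  irreducible_poly q -> q %| a * b -> (q %| a) || (q %| b).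
Proof.
move=> irr_q; have [_|q_ndvd_b] := boolP (q %| b); first by rewrite orbT.
by rewrite orbF Gauss_dvdpl // irreducible_poly_coprime.
Qed.

Variables G H : {poly R}.
Hypotheses (szG : (2 < size G)%N) (szH : (2 < size H)%N).

Lemma dvdp_comp_subX : (H \Po G - 'X) %| (G \Po H - 'X) \Po G.
Proof.
have := dvdp_sub_comp G (H \Po G) 'X.
by rewrite comp_polyXr comp_polyB comp_polyX comp_polyA.
Qed.

Lemma size_irredp_dvdp_comp_subX (q : {poly R}) :
  irreducible_poly q -> q %| (G \Po H - 'X) \Po G ->
  ((size q).-1 <= (size (G \Po H - 'X)%R).-1 * (size G).-1.-1)%N.
Proof.
set F := G \Po H - 'X; set A := H \Po G - 'X => irr_q q_dvd_FG.
have degF : (size F).-1 = ((size G).-1 * (size H).-1)%N by exact: size_comp_subX.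
have degA : (size A).-1 = (size F).-1 by rewrite degF mulnC size_comp_subX.
have degFG : (size (F \Po G)).-1 = ((size F).-1 * (size G).-1)%N.
  exact: size_comp_poly.
have GH_ge4 : (2 * 2 <= (size G).-1 * (size H).-1)%N by apply: leq_mul; lia.
have A_neq0 : A != 0 by rewrite -size_poly_eq0; lia.
have FG_neq0 : F \Po G != 0.
  by rewrite -size_poly_eq0; apply: contraTneq GH_ge4 => sz0; nia.
set K := (F \Po G) %/ A; have FG_eq : F \Po G = K * A.
  by rewrite divpK //; apply: dvdp_comp_subX.
have K_neq0 : K != 0 by apply: contraNneq FG_neq0 => K0; rewrite FG_eq K0 mul0r.
have degK : (size K).-1 = ((size F).-1 * (size G).-1.-1)%N.
  move: degFG; rewrite FG_eq size_mul // (polySpred K_neq0) (polySpred A_neq0).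
  by rewrite degA -[(size G).-1.-1]subn1 mulnBr muln1; lia.
have /orP[q_dvd_K | q_dvd_A] : (q %| K) || (q %| A).
  by apply: irredp_dvdp_mul; rewrite // -FG_eq.
- by rewrite -degK -!subn1 leq_sub2r // dvdp_leq.
- apply: (@leq_trans (size A).-1); first by rewrite -!subn1 leq_sub2r // dvdp_leq.
  by rewrite degA leq_pmulr //; lia.
Qed.

End FieldPolynomials.

Lemma minpoly_dvdp {x : algC} {p q : {poly rat}} :
  is_minpoly_Q x p -> root (map_poly ratr q) x -> p %| q.
Proof.
case=> p_monic p_x p_min q_x; apply/modp_eq0P/eqP; apply: contraT => r_neq0.
have r_x : root (map_poly ratr (q %% p)) x.
  move: q_x; rewrite /root (divp_eq (map_poly ratr q) (map_poly ratr p)).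
  by rewrite hornerD hornerM (eqP p_x) mulr0 add0r map_modp.
by have := p_min _ r_neq0 r_x; rewrite leqNgt ltn_modp monic_neq0.
Qed.

Lemma map_poly_ratr_intr (R : numFieldType) (u : {poly int}) :
  map_poly ratr (map_poly intr u : {poly rat}) = map_poly intr u :> {poly R}.
Proof. by rewrite -map_poly_comp; apply: eq_map_poly => z /=; rewrite ratr_int. Qed.

Theorem corollary1p4 (f g h : {poly int}) (alpha : algC) :
  irreducible_poly (map_poly intr f : {poly rat}) ->
  root (map_poly intr f) alpha ->
  f = (g \Po h) - 'X ->
  (2 < size g)%N -> (2 < size h)%N ->
  (forall p : {poly rat}, is_minpoly_Q (map_poly intr h).[alpha] p ->
      p %| map_poly intr (f \Po g)) /\
  admits_polysmoothness f (1 - (((size g).-1)%:R)^-1).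
Proof.
move=> _ f_alpha f_eq szg szh; subst f; split.
  move=> p minp; apply: (minpoly_dvdp minp).
  rewrite map_poly_ratr_intr map_comp_poly map_comp_poly_subX.
  by apply: root_comp_subX; rewrite -map_comp_poly_subX.
exists g; split=> [|q irr_q]; first lia.
have size_intr (u : {poly int}) : size (map_poly intr u : {poly rat}) = size u.
  by apply: size_map_inj_poly => //; apply: intr_inj.
rewrite map_comp_poly map_comp_poly_subX mulr_subr_invn ?ler_nat; last lia.
rewrite -!size_intr map_comp_poly_subX => q_dvd.
by apply: size_irredp_dvdp_comp_subX; rewrite ?size_intr.
Qed.
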